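(* Let $c > 0$, $\rho > 0$, and $\mathbf{d}\in\mathbb{R}^n$ with $\eta := \|\mathbf{d}\|_2 > 0$. Set $D = \dfrac{c}{\rho\,\eta^3}$. Then the polynomial $F(\tau) = \tau^3 - \tau^2 - D$ has exactly one real root, given by $$\tau^* = \frac13 + \frac13\left(C + \frac1C\right), \qquad C = \sqrt[3]{\frac{27D + 2 + \sqrt{(27D+2)^2 - 4}}{2}},$$ and $\tau^*>0$. Moreover, the problem $$\min_{\mathbf{y}\in\mathbb{R}^n\setminus\{\mathbf{0}\}} \ \frac{c}{\|\mathbf{y}\|_2} + \frac{\rho}{2}\|\mathbf{y}-\mathbf{d}\|_2^2$$ has the unique minimizer $\mathbf{y} = \tau^*\mathbf{d}$.
   Context: $\sqrt[3]{\cdot}$ denotes the real cube root. *)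

From Stdlib Require Import Reals.
Open Scope R_scope.

Definition cbrt (x : R) : R :=
  match Rlt_dec 0 x with
  | left _ => Rpower x (1/3)
  | right _ =>
      match Rlt_dec x 0 with
      | left _ => - Rpower (- x) (1/3)
      | right _ => 0
      end
  end.

(* Vectors of R^n are represented by functions nat -> R; only the
   coordinates 0..n-1 are relevant. *)
Fixpoint sumsq (n : nat) (y : nat -> R) : R :=
  match n with
  | O => 0
  | S k => sumsq k y + y k ^ 2
  end.

Definition norm2 (n : nat) (y : nat -> R) : R := sqrt (sumsq n y).

Definition nonzero_vec (n : nat) (y : nat -> R) : Prop :=
  exists i, (i < n)%nat /\ y i <> 0.

Definition vec_eq (n : nat) (y z : nat -> R) : Prop :=
  forall i, (i < n)%nat -> y i = z i.

Definition objective (n : nat) (c rho : R) (d y : nat -> R) : R :=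
  c / norm2 n y + rho / 2 * (norm2 n (fun i => y i - d i)) ^ 2.

(* Writing r = ||y||, the objective splits as
     c/r + rho/2 (r - eta)^2  +  rho (r eta - <y, d>),
   a radial part plus a Cauchy-Schwarz defect which is >= 0 and vanishes
   exactly on the nonnegative multiples of d.  The radial part has the
   unique critical point s = tau eta, where tau^3 - tau^2 = D, and its gap
   r |-> radial r - radial s factors as rho (r - s)^2 (r + 2s - 2 eta) / (2r),
   which is >= 0 because s > eta.  The root tau
   is found by Cardano: with u = C + 1/C one has u^3 - 3u = C^3 + C^-3
   = 27 D + 2, i.e. (1 + u)/3 solves the cubic. *)
From Stdlib Require Import Reals Lra Psatz Lia Classical.
Open Scope R_scope.

Fixpoint dotp (n : nat) (y z : nat -> R) : R :=
  match n with
  | O => 0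
  | S k => dotp k y z + y k * z k
  end.

Lemma dotp_diag n y : dotp n y y = sumsq n y.
Proof. induction n; simpl; [ring | rewrite IHn; ring]. Qed.

Lemma dotp_scalel n a y z : dotp n (fun i => a * y i) z = a * dotp n y z.
Proof. induction n; simpl; [ring | rewrite IHn; ring]. Qed.

Lemma dotp_eq0 n y z :
  (forall i, (i < n)%nat -> y i * z i = 0) -> dotp n y z = 0.
Proof.
  induction n as [|n IH]; intros H; simpl; [reflexivity|].
  rewrite IH, H; [ring | lia | intros i Hi; apply H; lia].
Qed.

Lemma sumsq_ge0 n y : 0 <= sumsq n y.
Proof. induction n; simpl; nra. Qed.

Lemma sumsq_scale n a y : sumsq n (fun i => a * y i) = a ^ 2 * sumsq n y.
Proof. induction n; simpl; [ring | rewrite IHn; ring]. Qed.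

Lemma sumsq_sub n y z :
  sumsq n (fun i => y i - z i) = sumsq n y - 2 * dotp n y z + sumsq n z.
Proof. induction n; simpl; [ring | rewrite IHn; ring]. Qed.

Lemma sumsq_lincomb n a b y z :
  sumsq n (fun i => a * y i - b * z i) =
  a ^ 2 * sumsq n y - 2 * a * b * dotp n y z + b ^ 2 * sumsq n z.
Proof. induction n; simpl; [ring | rewrite IHn; ring]. Qed.

Lemma sumsq_eq0 n y : sumsq n y = 0 -> forall i, (i < n)%nat -> y i = 0.
Proof.
  induction n as [|n IH]; intros H i Hi; [lia|]. simpl in H.
  pose proof (sumsq_ge0 n y).
  assert (Hn : sumsq n y = 0 /\ y n = 0) by (split; nra).
  destruct (Nat.eq_dec i n) as [->|]; [tauto|].
  apply IH; [tauto | lia].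
Qed.

Lemma norm2_ge0 n y : 0 <= norm2 n y.
Proof. apply sqrt_pos. Qed.

Lemma norm2_sq n y : norm2 n y ^ 2 = sumsq n y.
Proof. unfold norm2; rewrite pow2_sqrt; [reflexivity | apply sumsq_ge0]. Qed.

Lemma norm2_eq0 n y : norm2 n y = 0 -> forall i, (i < n)%nat -> y i = 0.
Proof.
  intros H; apply sumsq_eq0; rewrite <- norm2_sq, H; ring.
Qed.

Lemma norm2_gt0 n y : nonzero_vec n y <-> 0 < norm2 n y.
Proof.
  split.
  - intros [i [Hi Hyi]].
    destruct (Req_dec (norm2 n y) 0) as [H0|H0].
    + exfalso; exact (Hyi (norm2_eq0 n y H0 i Hi)).
    + pose proof (norm2_ge0 n y); lra.
  - intros Hpos; apply NNPP; intros Hzero.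
    assert (Hy : forall i, (i < n)%nat -> y i * y i = 0).
    { intros i Hi.
      destruct (Req_dec (y i) 0) as [->|Hyi]; [ring|].
      exfalso; apply Hzero; exists i; tauto. }
    assert (Hs : sumsq n y = 0) by (rewrite <- dotp_diag; exact (dotp_eq0 n y y Hy)).
    unfold norm2 in Hpos; rewrite Hs, sqrt_0 in Hpos; lra.
Qed.

Lemma norm2_scale n a y : 0 <= a -> norm2 n (fun i => a * y i) = a * norm2 n y.
Proof.
  intros Ha; unfold norm2.
  rewrite sumsq_scale, sqrt_mult by (nra || apply sumsq_ge0).
  rewrite sqrt_pow2 by exact Ha; reflexivity.
Qed.

(* Both Cauchy-Schwarz facts come from the square [|| |z| y - |y| z ||^2 >= 0]. *)
Lemma norm2_lincomb_sq n y z :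
  sumsq n (fun i => norm2 n z * y i - norm2 n y * z i) =
  2 * norm2 n y * norm2 n z * (norm2 n y * norm2 n z - dotp n y z).
Proof. rewrite sumsq_lincomb, <- (norm2_sq n y), <- (norm2_sq n z); ring. Qed.

Lemma dotp_le_norm2 n y z : dotp n y z <= norm2 n y * norm2 n z.
Proof.
  pose proof (norm2_lincomb_sq n y z) as Hsq.
  pose proof (sumsq_ge0 n (fun i => norm2 n z * y i - norm2 n y * z i)).
  pose proof (norm2_ge0 n y); pose proof (norm2_ge0 n z).
  destruct (Req_dec (norm2 n y) 0) as [Hy|Hy].
  { rewrite (dotp_eq0 n y z) by (intros i Hi; rewrite (norm2_eq0 n y Hy i Hi); ring).
    rewrite Hy; lra. }
  destruct (Req_dec (norm2 n z) 0) as [Hz|Hz].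
  { rewrite (dotp_eq0 n y z) by (intros i Hi; rewrite (norm2_eq0 n z Hz i Hi); ring).
    rewrite Hz; lra. }
  assert (0 < 2 * norm2 n y * norm2 n z) by nra.
  nra.
Qed.

Lemma dotp_eq_norm2 n y z :
  0 < norm2 n z -> dotp n y z = norm2 n y * norm2 n z ->
  vec_eq n y (fun i => norm2 n y / norm2 n z * z i).
Proof.
  intros Hz Heq i Hi.
  assert (Hsq : sumsq n (fun i => norm2 n z * y i - norm2 n y * z i) = 0)
    by (rewrite norm2_lincomb_sq, Heq; ring).
  pose proof (sumsq_eq0 _ _ Hsq i Hi) as Hzi; simpl in Hzi.
  field_simplify_eq; lra.
Qed.

Definition radial (c rho eta r : R) : R := c / r + rho / 2 * (r - eta) ^ 2.

(* [c = rho s^2 (s - eta)] says that [s] is a critical point of [radial]. *)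
Lemma radial_gap c rho eta r s :
  0 < r -> 0 < s -> c = rho * s ^ 2 * (s - eta) ->
  2 * r * (radial c rho eta r - radial c rho eta s) =
  rho * (r - s) ^ 2 * (r + 2 * s - 2 * eta).
Proof.
  intros Hr Hs ->; unfold radial; field; lra.
Qed.

Lemma radial_min c rho eta r s :
  0 < rho -> 0 < r -> 0 < s -> eta < s -> c = rho * s ^ 2 * (s - eta) ->
  radial c rho eta s <= radial c rho eta r /\
  (radial c rho eta r <= radial c rho eta s -> r = s).
Proof.
  intros Hrho Hr Hs0 Hs Hc.
  pose proof (radial_gap c rho eta r s Hr Hs0 Hc) as Hgap.
  assert (Hsq : 0 <= rho * (r - s) ^ 2)
    by (pose proof (pow2_ge_0 (r - s)); apply Rmult_le_pos; lra).
  split.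
  - nra.
  - intros Hle.
    assert (Hzero : rho * (r - s) ^ 2 = 0) by nra.
    apply Rmult_integral in Hzero as [|Hzero]; [lra|].
    nra.
Qed.

Lemma objective_decomp n c rho d y :
  objective n c rho d y =
  radial c rho (norm2 n d) (norm2 n y)
  + rho * (norm2 n y * norm2 n d - dotp n y d).
Proof.
  unfold objective, radial.
  rewrite norm2_sq, sumsq_sub, <- (norm2_sq n y), <- (norm2_sq n d); lra.
Qed.

Lemma cubic_root_gt1 D t : 0 < D -> t ^ 3 - t ^ 2 = D -> 1 < t.
Proof.
  intros HD Ht; destruct (Rle_lt_dec t 1) as [Hle|]; [|assumption].
  assert (t ^ 3 - t ^ 2 = t ^ 2 * (t - 1)) by ring.
  pose proof (pow2_ge_0 t); nra.
Qed.

Lemma cubic_root_unique D s t :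
  0 < D -> s ^ 3 - s ^ 2 = D -> t ^ 3 - t ^ 2 = D -> s = t.
Proof.
  intros HD Hs Ht.
  pose proof (cubic_root_gt1 D s HD Hs); pose proof (cubic_root_gt1 D t HD Ht).
  assert (Hfac : (s - t) * (s ^ 2 + s * t + t ^ 2 - s - t) = 0) by nra.
  assert (s ^ 2 + s * t + t ^ 2 - s - t > 0) by nra.
  nra.
Qed.

Section Minimizer.

Variables (n : nat) (c rho tau : R) (d : nat -> R).
Hypotheses (hc : 0 < c) (hrho : 0 < rho) (heta : 0 < norm2 n d)
  (hroot : c = rho * norm2 n d ^ 3 * (tau ^ 3 - tau ^ 2)).

Lemma minimizer_tau_gt1 : 1 < tau.
Proof.
  apply (cubic_root_gt1 (tau ^ 3 - tau ^ 2)); [|reflexivity].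
  assert (0 < rho * norm2 n d ^ 3) by (apply Rmult_lt_0_compat; [lra | apply pow_lt; lra]).
  nra.
Qed.

Lemma minimizer_norm2 : norm2 n (fun i => tau * d i) = tau * norm2 n d.
Proof. pose proof minimizer_tau_gt1; apply norm2_scale; lra. Qed.

Lemma minimizer_critical :
  c = rho * (tau * norm2 n d) ^ 2 * (tau * norm2 n d - norm2 n d).
Proof. rewrite hroot; ring. Qed.

Lemma minimizer_nonzero : nonzero_vec n (fun i => tau * d i).
Proof. pose proof minimizer_tau_gt1; apply norm2_gt0; rewrite minimizer_norm2; nra. Qed.

Lemma objective_minimizer :
  objective n c rho d (fun i => tau * d i) = radial c rho (norm2 n d) (tau * norm2 n d).
Proof.
  rewrite objective_decomp, minimizer_norm2, dotp_scalel, dotp_diag, <- norm2_sq; ring.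
Qed.

Lemma objective_minimizer_le y :
  nonzero_vec n y ->
  objective n c rho d (fun i => tau * d i) <= objective n c rho d y.
Proof.
  intros Hy%norm2_gt0; pose proof minimizer_tau_gt1.
  rewrite objective_minimizer, (objective_decomp n c rho d y).
  destruct (radial_min c rho (norm2 n d) (norm2 n y) (tau * norm2 n d)
              hrho Hy ltac:(nra) ltac:(nra) minimizer_critical) as [Hmin _].
  pose proof (dotp_le_norm2 n y d); nra.
Qed.

Lemma objective_minimizer_unique y :
  nonzero_vec n y ->
  objective n c rho d y <= objective n c rho d (fun i => tau * d i) ->
  vec_eq n y (fun i => tau * d i).
Proof.
  intros Hy%norm2_gt0 Hle; pose proof minimizer_tau_gt1.
  rewrite objective_minimizer, (objective_decomp n c rho d y) in Hle.
  destruct (radial_min c rho (norm2 n d) (norm2 n y) (tau * norm2 n d)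
              hrho Hy ltac:(nra) ltac:(nra) minimizer_critical) as [Hmin Heq].
  pose proof (dotp_le_norm2 n y d).
  assert (Hdot : dotp n y d = norm2 n y * norm2 n d) by nra.
  assert (Hr : norm2 n y = tau * norm2 n d) by (apply Heq; nra).
  intros i Hi; rewrite (dotp_eq_norm2 n y d heta Hdot i Hi), Hr.
  field; lra.
Qed.

End Minimizer.

Lemma cbrt_pos x : 0 < x -> 0 < cbrt x.
Proof.
  intros Hx; unfold cbrt; destruct (Rlt_dec 0 x); [apply exp_pos | lra].
Qed.

Lemma cbrt_cube x : 0 < x -> cbrt x ^ 3 = x.
Proof.
  intros Hx; unfold cbrt; destruct (Rlt_dec 0 x); [|lra].
  rewrite <- Rpower_pow by apply exp_pos.
  rewrite Rpower_mult; replace (1 / 3 * INR 3) with 1 by (simpl; field).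
  apply Rpower_1; exact Hx.
Qed.

Lemma cube_add_inv u : u <> 0 -> (u + 1 / u) ^ 3 = u ^ 3 + 1 / u ^ 3 + 3 * (u + 1 / u).
Proof. intros Hu; field; exact Hu. Qed.

Lemma cardano_root D :
  0 <= D ->
  let C := cbrt ((27 * D + 2 + sqrt ((27 * D + 2) ^ 2 - 4)) / 2) in
  (1/3 + 1/3 * (C + 1 / C)) ^ 3 - (1/3 + 1/3 * (C + 1 / C)) ^ 2 = D.
Proof.
  intros HD C.
  set (K := 27 * D + 2) in C.
  set (Q := sqrt (K ^ 2 - 4)) in C.
  set (A := (K + Q) / 2) in C.
  assert (HQ : Q ^ 2 = K ^ 2 - 4) by (apply pow2_sqrt; unfold K; nra).
  assert (HQ0 : 0 <= Q) by apply sqrt_pos.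
  assert (HA : 1 <= A) by (unfold A, K in *; lra).
  (* [A] and [(K - Q)/2] are the two roots of [X^2 - K X + 1]. *)
  assert (HAinv : A + 1 / A = K).
  { replace (1 / A) with ((K - Q) / 2) by (field_simplify_eq; unfold A; nra).
    unfold A; field. }
  assert (HC : 0 < C) by (apply cbrt_pos; lra).
  assert (HC3 : C ^ 3 = A) by (apply cbrt_cube; lra).
  pose proof (cube_add_inv C ltac:(lra)) as Hu.
  rewrite HC3, HAinv in Hu.
  set (u := C + 1 / C) in *.
  unfold K in Hu; nra.
Qed.

Theorem mainTheorem6 (n : nat) (c rho : R) (d : nat -> R)
  (hc : 0 < c) (hrho : 0 < rho) (heta : 0 < norm2 n d) :
  let eta := norm2 n d in
  let D := c / (rho * eta ^ 3) in
  let C := cbrt ((27 * D + 2 + sqrt ((27 * D + 2) ^ 2 - 4)) / 2) in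
  let tau := 1/3 + 1/3 * (C + 1 / C) in
  (* F(t) = t^3 - t^2 - D has exactly one real root, namely tau *)
  (forall t : R, t ^ 3 - t ^ 2 - D = 0 <-> t = tau) /\
  0 < tau /\
  (* tau * d is the unique minimizer over R^n \ {0} *)
  nonzero_vec n (fun i => tau * d i) /\
  (forall y : nat -> R, nonzero_vec n y ->
     objective n c rho d (fun i => tau * d i) <= objective n c rho d y) /\
  (forall y : nat -> R, nonzero_vec n y ->
     objective n c rho d y <= objective n c rho d (fun i => tau * d i) ->
     vec_eq n y (fun i => tau * d i)).
Proof.
  intros eta D C tau.
  assert (Heta : 0 < eta) by exact heta.
  assert (Heta3 : 0 < rho * eta ^ 3) by (apply Rmult_lt_0_compat; [lra | apply pow_lt; lra]).
  assert (HD : 0 < D) by (apply Rdiv_lt_0_compat; lra).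
  assert (Htau : tau ^ 3 - tau ^ 2 = D) by (apply cardano_root; lra).
  assert (Hroot : c = rho * norm2 n d ^ 3 * (tau ^ 3 - tau ^ 2))
    by (rewrite Htau; unfold D; fold eta; field; split; lra).
  split; [|split; [|split; [|split]]].
  - intros t; split; intros Ht.
    + apply (cubic_root_unique D); lra.
    + rewrite Ht; lra.
  - pose proof (cubic_root_gt1 D tau HD Htau); lra.
  - exact (minimizer_nonzero n c rho tau d hc hrho heta Hroot).
  - exact (objective_minimizer_le n c rho tau d hc hrho heta Hroot).
  - exact (objective_minimizer_unique n c rho tau d hc hrho heta Hroot).
Qed.
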